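(* There exist infinitely many terms of the Smarandache square-digital subsequence which are not of the form $N \times 10^{2k}$ with $k \in \mathbb{N}$ and $N$ a perfect square.
   Context: The Smarandache square-digital subsequence consists of those perfect squares $n^2$, $n \in \mathbb{N}_0 = \{0,1,2,\dots\}$, all of whose decimal digits belong to the set $\{0,1,4,9\}$ (i.e., every decimal digit is itself a perfect square). *)

From mathcomp Require Import all_boot.

Definition is_square (m : nat) : Prop := exists n : nat, m = n ^ 2.

(* The i-th decimal digit of m (i = 0 is the units digit); digits beyond the
   length of m are 0, which is itself a square digit, so harmless. *)
Definition dec_digit (m i : nat) : nat := (m %/ 10 ^ i) %% 10.

Definition square_digits (m : nat) : Prop :=
  forall i : nat, dec_digit m i \in [:: 0; 1; 4; 9].

Definition square_digital (m : nat) : Prop := is_square m /\ square_digits m.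

(** For n >= 2 the square (10^n + 7)^2 = 10^(2n) + 14 * 10^n + 49 is written
    with the digits 1, 4, 9 and zeros only; being odd, it is not a multiple of
    any positive power of 10. *)
From mathcomp Require Import all_boot zify.

Lemma dec_digit_small c i : c < 10 ^ i -> dec_digit c i = 0.
Proof. by move=> lt_c; rewrite /dec_digit divn_small. Qed.

Lemma dec_digitMD a b k i : b < 10 ^ k ->
  dec_digit (a * 10 ^ k + b) i = if i < k then dec_digit b i else dec_digit a (i - k).
Proof.
move=> lt_b; rewrite /dec_digit; case: ltnP => [lt_ik | le_ki].
  have -> : 10 ^ k = 10 ^ (k - i) * 10 ^ i by rewrite -expnD subnK // ltnW.
  rewrite mulnA divnMDl ?expn_gt0 //.
  have : 0 < k - i by rewrite subn_gt0.
  case: (k - i) => [|j] // _.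
  by rewrite expnS -modnDml mulnCA modnMr add0n.
have -> : 10 ^ i = 10 ^ k * 10 ^ (i - k) by rewrite -expnD subnKC.
by rewrite divnMA divnMDl ?expn_gt0 // (divn_small lt_b) addn0.
Qed.

Lemma square_digits_digit c : c \in [:: 0; 1; 4; 9] -> square_digits c.
Proof.
move=> c_sq; have lt_c : c < 10 by move: c_sq; rewrite !inE; lia.
case=> [|i]; first by rewrite /dec_digit divn1 modn_small.
rewrite dec_digit_small //; apply: leq_trans lt_c _.
by rewrite expnS leq_pmulr ?expn_gt0.
Qed.

Lemma square_digitsMD a b k : square_digits a -> square_digits b -> b < 10 ^ k ->
  square_digits (a * 10 ^ k + b).
Proof. by move=> sq_a sq_b lt_b i; rewrite dec_digitMD //; case: ifP. Qed.

Lemma odd_mul_pow10 N k : 0 < k -> ~~ odd (N * 10 ^ k).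
Proof. by case: k => // k _; rewrite oddM oddX andbF. Qed.

Lemma square_digits_pow10_add7_sqr n : 1 < n -> square_digits ((10 ^ n + 7) ^ 2).
Proof.
move=> lt1n; have le100 : 10 ^ 2 <= 10 ^ n by rewrite leq_exp2l.
have -> : (10 ^ n + 7) ^ 2 = (1 * 10 ^ n + (1 * 10 ^ 1 + 4)) * 10 ^ n + (4 * 10 ^ 1 + 9).
  by set X := 10 ^ n; nia.
by do !apply: square_digitsMD; by [| apply: square_digits_digit | apply: leq_trans _ le100].
Qed.

Theorem theorem1 :
  forall B : nat, exists m : nat,
    B < m /\ square_digital m /\
    ~ (exists N k : nat, 0 < k /\ is_square N /\ m = N * 10 ^ (2 * k)).
Proof.
move=> B; exists ((10 ^ B.+2 + 7) ^ 2); split; [|split; [split|]].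
- have := ltn_expl B.+2 (isT : 1 < 10); set X := 10 ^ B.+2; nia.
- by exists (10 ^ B.+2 + 7).
- exact: square_digits_pow10_add7_sqr.
- case=> N [k [k_gt0 [_ def_m]]].
  have : odd ((10 ^ B.+2 + 7) ^ 2) by rewrite oddX oddD oddX.
  by rewrite def_m; apply/negP/odd_mul_pow10; rewrite muln_gt0.
Qed.
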